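(* Let $M$ be a matroid on $E$ and let $(M_1,\dots,M_d)$ be a $d$-th symmetric power of $M$. Then for every flat $F$ of $M$, the set $F\cdot\mathrm{Sym}_{d-1}(E)$ is a flat of $M_d$.
   Context: $\mathrm{Sym}_d(E)$: multisets of size $d$ from $E$, written multiplicatively, $\mathrm{Sym}_0(E)=\{1\}$; $F\cdot\mathrm{Sym}_{d-1}(E)$ is the set of elements of $\mathrm{Sym}_d(E)$ containing at least one element of $F$. For $\alpha\in\mathrm{Sym}_{d-i}(E)$ and a matroid $N$ on $\mathrm{Sym}_d(E)$, $N|_\alpha$ is the restriction to $\{\alpha\beta:\beta\in\mathrm{Sym}_i(E)\}$. A $d$-th symmetric quasi power of $M$ is a sequence $(M_1,\dots,M_d)$ of matroids, $M_1=M$, $M_i$ on $\mathrm{Sym}_i(E)$, such that for every $1\le i\le d$ and $\alpha\in\mathrm{Sym}_{d-i}(E)$: if no element of $\alpha$ is a loop of $M$, $\beta\mapsto\alpha\beta$ is an isomorphism $M_i\cong M_d|_\alpha$; otherwise $\mathrm{rk}(M_d|_\alpha)=0$. It is a $d$-th symmetric power if also $\mathrm{rk}(M_d)=\binom{\mathrm{rk}(M)+d-1}{d}$. *)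

From mathcomp Require Import all_boot.
Set Implicit Arguments. Unset Strict Implicit. Unset Printing Implicit Defensive.

Record matroid (T : finType) := Matroid {
  ground : {set T};
  indep : {set T} -> bool;
  indep_ground : forall I, indep I -> I \subset ground;
  indep0 : indep set0;
  indep_sub : forall I J : {set T}, J \subset I -> indep I -> indep J;
  indep_aug : forall I J : {set T}, indep I -> indep J -> #|I| < #|J| ->
     exists2 x, x \in J :\: I & indep (x |: I)
}.

Section MatroidNotions.
Variable T : finType.
Implicit Types (M : matroid T) (A : {set T}).

Definition rk M A : nat := \max_(I : {set T} | indep M I && (I \subset A)) #|I|.

Definition mrank M : nat := rk M (ground M).

Definition flat M A : Prop :=
  A \subset ground M /\ forall x, x \in ground M :\: A -> rk M A < rk M (x |: A).

Definition loop M (x : T) : bool := (x \in ground M) && ~~ indep M [set x].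
End MatroidNotions.

(* [f] is an isomorphism from N onto the restriction N'|_S *)
Definition iso_restr (T T' : finType) (N : matroid T) (N' : matroid T')
    (f : T -> T') (S : {set T'}) : Prop :=
  {in ground N &, injective f} /\ f @: ground N = S /\ S \subset ground N' /\
  forall I : {set T}, I \subset ground N -> indep N I = indep N' (f @: I).

(* Multisets over E of size at most d, written as multiplicity functions. *)
Definition msetT (E : finType) (d : nat) := {ffun E -> 'I_d.+1}.

(* Sym_i(E) inside the ambient type (for i <= d) *)
Definition Sym (E : finType) (d i : nat) : {set msetT E d} :=
  [set m : msetT E d | \sum_(e : E) (m e : nat) == i].

Definition mmul (E : finType) (d : nat) (a b : msetT E d) : msetT E d :=
  [ffun e => inord (a e + b e)].

Definition msingle (E : finType) (d : nat) (e : E) : msetT E d :=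
  [ffun x => inord (x == e)].

(* F . Sym_{d-1}(E): elements of Sym_d(E) containing some element of F *)
Definition FSym (E : finType) (d : nat) (F : {set E}) : {set msetT E d} :=
  [set m in @Sym E d d | [exists e in F, 0 < (m : msetT E d) e]].

(* d-th symmetric quasi power (M_1,...,M_d) = (Ms 1, ..., Ms d) of M,
   where M is a matroid on the whole of E. *)
Definition sym_quasi_power (E : finType) (d : nat) (M : matroid E)
    (Ms : nat -> matroid (msetT E d)) : Prop :=
  (forall i, 1 <= i <= d -> ground (Ms i) = @Sym E d i) /\
  iso_restr M (Ms 1) (@msingle E d) (@Sym E d 1) /\
  (forall i, 1 <= i <= d -> forall alpha, alpha \in @Sym E d (d - i) ->
     if [forall e, (0 < alpha e) ==> ~~ loop M e]
     then iso_restr (Ms i) (Ms d) (mmul alpha) (mmul alpha @: @Sym E d i)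
     else rk (Ms d) (mmul alpha @: @Sym E d i) = 0).

Definition sym_power (E : finType) (d : nat) (M : matroid E)
    (Ms : nat -> matroid (msetT E d)) : Prop :=
  sym_quasi_power M Ms /\ mrank (Ms d) = 'C(mrank M + d - 1, d).

From mathcomp Require Import all_boot.
Set Implicit Arguments. Unset Strict Implicit. Unset Printing Implicit Defensive.

(* Choose a basis BF of F and extend it to a basis B of M.  The transfer
   principle [cl_replace] carries closure relations of M = M_1 to M_d along
   the isomorphisms M_1 ~ M_d|alpha; iterated over the letters of a word
   ([cl_expand]) it shows that the degree-d monomials in B span M_d, and as
   there are at most binomial(rk M + d - 1, d) = rk M_d of them, they form a
   basis ([monomials_indep]).
   Let x = mset s have degree d and no letter in F.  Ordering B \ BF, each
   letter e of s has a leading element lead e in B \ BF: e is spanned by BF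
   and the elements up to lead e, and, by exchange, lead e is spanned by e,
   BF and the elements before it.  Replacing the letters of s by their
   leading elements one at a time ([lead_prefix_cl]) shows that the monomial
   u = mset (map lead s) is spanned by x, F.Sym and monomials in B \ BF of
   smaller weight, while F.Sym is spanned by the monomials in B other than u
   ([FSym_cl_basis]).  So if F.Sym spanned x, u would be spanned by the
   other elements of the monomial basis, which is absurd ([FSym_ncl]). *)

Section RankClosure.
Variables (T : finType) (M : matroid T).
Implicit Types (A B I S Y F : {set T}).

Lemma rk_max A I : indep M I -> I \subset A -> #|I| <= rk M A.
Proof.
move=> hI sIA; rewrite /rk.
by apply: (@leq_bigmax_cond _ (fun J => indep M J && (J \subset A)) (fun J => #|J|));
  rewrite hI sIA.
Qed.

Lemma rk_wit A : exists I, [/\ indep M I, I \subset A & #|I| = rk M A].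
Proof.
have h0 : 0 < #|[pred I : {set T} | indep M I && (I \subset A)]|.
  by apply/card_gt0P; exists set0; rewrite inE indep0 sub0set.
have [I] := eq_bigmax_cond (fun I : {set T} => #|I|) h0.
by rewrite inE => /andP[hI sIA] eI; exists I.
Qed.

Lemma rk_mono A B : A \subset B -> rk M A <= rk M B.
Proof.
move=> sAB; have [I [hI sIA <-]] := rk_wit A.
exact: rk_max hI (subset_trans sIA sAB).
Qed.

Lemma rk_card A : rk M A <= #|A|.
Proof. by have [I [_ sIA <-]] := rk_wit A; apply: subset_leq_card. Qed.

Lemma indep_rk A : indep M A -> rk M A = #|A|.
Proof. by move=> hA; apply/eqP; rewrite eqn_leq rk_card rk_max. Qed.

Lemma rk_indep A : rk M A = #|A| -> indep M A.
Proof.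
have [I [hI sIA <-]] := rk_wit A => eIA.
suff /eqP <- : I == A by [].
by rewrite eqEcard sIA eIA leqnn.
Qed.

Lemma rk0 : rk M set0 = 0.
Proof. by apply/eqP; rewrite -leqn0 (leq_trans (rk_card _)) ?cards0. Qed.

Lemma rk_U1ge A y : rk M A <= rk M (y |: A).
Proof. by apply: rk_mono; apply: subsetUr. Qed.

Lemma rk_U1le A y : rk M (y |: A) <= (rk M A).+1.
Proof.
have [I [hI sIA <-]] := rk_wit (y |: A).
rewrite (cardsD1 y I) -add1n leq_add //; first by case: (y \in I).
apply: rk_max; first exact: indep_sub (subD1set I y) hI.
apply/subsetP=> z; rewrite !inE => /andP[zy zI].
by move: (subsetP sIA z zI); rewrite !inE (negbTE zy).
Qed.

Lemma indep_augment A I : indep M I -> I \subset A -> #|I| < rk M A ->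
  exists2 x, x \in A :\: I & indep M (x |: I).
Proof.
move=> hI sIA ltIA; have [J [hJ sJA eJ]] := rk_wit A.
have [|x] := indep_aug hI hJ; first by rewrite eJ.
rewrite !inE => /andP[xI xJ] hx; exists x => //.
by rewrite !inE xI (subsetP sJA).
Qed.

Lemma indep_extend A I : indep M I -> I \subset A ->
  exists J, [/\ indep M J, I \subset J, J \subset A & #|J| = rk M A].
Proof.
move Hn: (rk M A - #|I|) => n; elim: n I Hn => [|n IH] I Hn hI sIA.
  exists I; split => //; apply/eqP; rewrite eqn_leq rk_max //.
  by rewrite -subn_eq0 Hn.
have [|x] := indep_augment hI sIA; first by rewrite -subn_gt0 Hn.
rewrite !inE => /andP[xI xA] hx.
have [||J [hJ sxJ sJA eJ]] := IH (x |: I) _ hx.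
- by rewrite cardsU1 xI add1n subnS Hn.
- by rewrite subUset sub1set xA.
by exists J; split => //; apply: subset_trans sxJ; apply: subsetUr.
Qed.

Definition cl A (y : T) : bool := rk M (y |: A) == rk M A.

Lemma cl_self A y : y \in A -> cl A y.
Proof. by move=> yA; rewrite /cl (setUidPr _) // sub1set. Qed.

(* Closure is monotone: a basis of A extended inside B keeps spanning y. *)
Lemma cl_mono A B y : A \subset B -> cl A y -> cl B y.
Proof.
move=> sAB /eqP clAy; rewrite /cl eqn_leq rk_U1ge andbT leqNgt.
apply/negP => ltB.
have [I [hI sIA eI]] := rk_wit A.
have [J [hJ sIJ sJB eJ]] := indep_extend hI (subset_trans sIA sAB).
have [||x] := indep_augment (A := y |: B) hJ; first exact: subset_trans sJB (subsetUr _ _).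
  by rewrite eJ.
rewrite !inE => /andP[xJ /orP[/eqP xy|xB]] hx; last first.
  have sxB : x |: J \subset B by rewrite subUset sub1set xB sJB.
  by have := rk_max hx sxB; rewrite cardsU1 xJ eJ add1n ltnn.
subst x; have yI : y \notin I by apply: contra xJ; apply: (subsetP sIJ).
have := rk_max (indep_sub (setUS [set y] sIJ) hx) (setUS [set y] sIA).
by rewrite cardsU1 yI eI clAy add1n ltnn.
Qed.

Lemma rk_clU A Y : {in A, forall a, cl Y a} -> rk M (Y :|: A) = rk M Y.
Proof.
elim: {A}_.+1 {-2}A (ltnSn #|A|) => // n IH A ltA clA.
have [->|[a aA]] := set_0Vmem A; first by rewrite setU0.
have -> : Y :|: A = a |: (Y :|: (A :\ a)) by rewrite setUCA (setD1K aA).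
have clA' : {in A :\ a, forall b, cl Y b}.
  by move=> b; rewrite inE => /andP[_ /clA].
rewrite -(IH (A :\ a)) //; last by rewrite (cardsD1 a A) aA in ltA.
by apply/eqP; apply: cl_mono (clA a aA); apply: subsetUl.
Qed.

Lemma cl_trans A Y y : {in A, forall a, cl Y a} -> cl A y -> cl Y y.
Proof.
move=> clA clAy; rewrite /cl eqn_leq rk_U1ge andbT.
have <- : rk M (y |: (Y :|: A)) = rk M Y.
  by have /eqP := cl_mono (subsetUr Y A) clAy; rewrite (rk_clU clA).
by apply: rk_mono; apply: setUS; apply: subsetUl.
Qed.

Lemma cl_exch A x y : cl (x |: A) y -> ~~ cl A y -> cl (y |: A) x.
Proof.
rewrite /cl => /eqP clxy ncly.
have rky : rk M (y |: A) = (rk M A).+1.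
  by apply/eqP; rewrite eqn_leq rk_U1le ltn_neqAle eq_sym ncly rk_U1ge.
by rewrite eqn_leq rk_U1ge andbT setUCA clxy rky rk_U1le.
Qed.

Lemma cl_rk0 S Y z : rk M S = 0 -> z \in S -> cl Y z.
Proof.
move=> rkS zS; apply: (cl_mono (sub0set Y)).
rewrite /cl rk0 setU0; apply/eqP/eqP; rewrite -leqn0 -rkS.
by apply: rk_mono; rewrite sub1set.
Qed.

Lemma basis_cl A B : B \subset A -> #|B| = rk M A -> indep M B ->
  {in A, forall e, cl B e}.
Proof.
move=> sBA cB iB e eA; rewrite /cl eqn_leq rk_U1ge andbT (indep_rk iB) cB.
by apply: rk_mono; rewrite subUset sub1set eA.
Qed.

Lemma spanning_indep S A : {in S, forall m, cl A m} -> #|A| <= rk M S ->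
  indep M A.
Proof.
move=> spanS cA; apply: rk_indep; apply/eqP; rewrite eqn_leq rk_card.
apply: leq_trans cA _; rewrite -(rk_clU spanS).
exact: rk_mono (subsetUr _ _).
Qed.

Lemma indep_ncl I u : indep M I -> u \in I -> ~~ cl (I :\ u) u.
Proof.
move=> iI uI; rewrite /cl (setD1K uI) (indep_rk iI) (cardsD1 u I) uI add1n.
by rewrite neq_ltn ltnS rk_card orbT.
Qed.

Lemma flat_ncl F x : flat M F -> x \in ground M -> x \notin F -> ~~ cl F x.
Proof.
case=> _ hF xg xF; rewrite /cl neq_ltn; apply/orP; right.
by apply: hF; rewrite inE xF.
Qed.

Lemma ncl_flat F : F \subset ground M ->
  (forall x, x \in ground M :\: F -> ~~ cl F x) -> flat M F.
Proof.
move=> sF hF; split => // x /hF nclx.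
by rewrite ltn_neqAle rk_U1ge andbT eq_sym.
Qed.

End RankClosure.

Section Isomorphism.
Variables (T T' : finType) (N : matroid T) (N' : matroid T') (f : T -> T').
Variable S : {set T'}.
Hypothesis iso : iso_restr N N' f S.
Implicit Types A : {set T}.

Let card_img A : A \subset ground N -> #|f @: A| = #|A|.
Proof.
case: iso => inj _ sA; apply: card_in_imset => a b ha hb.
by apply: inj; apply: (subsetP sA).
Qed.

Lemma iso_rk A : A \subset ground N -> rk N' (f @: A) = rk N A.
Proof.
case: iso => _ [_ [_ indepE]] sA; apply/eqP; rewrite eqn_leq; apply/andP; split.
  have [I' [hI' sI' <-]] := rk_wit N' (f @: A).
  set I := A :&: f @^-1: I'.
  have sI : I \subset ground N by apply: subset_trans sA; apply: subsetIl.
  have fI : f @: I = I'.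
    apply/setP=> y; apply/imsetP/idP => [[a]|yI].
      by rewrite !inE => /andP[_ ha] ->.
    have /imsetP[a aA ya] := subsetP sI' y yI; subst y.
    by exists a => //; rewrite !inE aA yI.
  rewrite -fI card_img //; apply: rk_max (subsetIl _ _).
  by rewrite indepE // fI.
have [I [hI sIA <-]] := rk_wit N A.
have sI : I \subset ground N by apply: subset_trans sA.
rewrite -card_img //; apply: rk_max (imsetS _ sIA).
by rewrite -indepE.
Qed.

Lemma iso_cl A y : A \subset ground N -> y \in ground N ->
  cl N' (f @: A) (f y) = cl N A y.
Proof.
by move=> sA yg; rewrite /cl -imsetU1 !iso_rk // subUset sub1set yg.
Qed.

End Isomorphism.

Section Words.
Variables (E : finType) (d : nat).
Implicit Types (s t : seq E) (m : msetT E d).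

(* The multiset of the letters of a word of length at most d. *)
Definition mset s : msetT E d := [ffun e => inord (count_mem e s)].

Lemma mset_val s e : size s <= d -> (mset s e : nat) = count_mem e s.
Proof. by move=> hs; rewrite ffunE inordK // ltnS (leq_trans (count_size _ _)). Qed.

Lemma mset_pos s e : size s <= d -> (0 < mset s e) = (e \in s).
Proof. by move=> hs; rewrite mset_val // -has_count has_pred1. Qed.

Lemma mset_perm s t : perm_eq s t -> mset s = mset t.
Proof. by move/permP => st; apply/ffunP => e; rewrite !ffunE st. Qed.

Lemma sum_count (w : E -> nat) s : \sum_e count_mem e s * w e = sumn (map w s).
Proof.
elim: s => [|a s IH] /=; first by rewrite big1.
under eq_bigr => e _ do rewrite mulnDl.
rewrite big_split /= IH (bigD1 a) //= eqxx mul1n big1 ?addn0 // => e ea.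
by rewrite eq_sym (negbTE ea).
Qed.

Lemma sum_mset (w : E -> nat) s : size s <= d ->
  \sum_e (mset s e : nat) * w e = sumn (map w s).
Proof. by move=> hs; rewrite -sum_count; apply: eq_bigr => e _; rewrite mset_val. Qed.

Lemma mset_Sym s k : size s = k -> k <= d -> mset s \in Sym E d k.
Proof.
move=> hs hk; have hsd : size s <= d by rewrite hs.
rewrite inE -hs; apply/eqP.
have := sum_mset (fun=> 1) hsd; under eq_bigr do rewrite muln1.
by move=> ->; elim: (s) => //= a t ->.
Qed.

Lemma Sym_mset m k : m \in Sym E d k -> exists2 s, size s = k & mset s = m.
Proof.
rewrite inE => /eqP hk; exists (flatten [seq nseq (m e) e | e <- enum E]).
  rewrite size_flatten /shape -map_comp sumnE big_map -hk big_enum /=.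
  by apply: eq_bigr => e _; rewrite /= size_nseq.
apply/ffunP => x; rewrite ffunE count_flatten -map_comp sumnE big_map big_enum /=.
rewrite (bigD1 x) //= count_nseq /= eqxx mul1n big1 ?addn0 ?inord_val //.
by move=> e ex; rewrite count_nseq /= (negbTE ex).
Qed.

Lemma mmul_mset s t : size (s ++ t) <= d -> mmul (mset s) (mset t) = mset (s ++ t).
Proof.
rewrite size_cat => hst; apply/ffunP => e; rewrite !ffunE count_cat.
have hs : count_mem e s <= d by apply: leq_trans (count_size _ _) (leq_trans (leq_addr _ _) hst).
have ht : count_mem e t <= d by apply: leq_trans (count_size _ _) (leq_trans (leq_addl _ _) hst).
by rewrite !inordK.
Qed.

Lemma msingle_mset e : msingle d e = mset [:: e].
Proof. by apply/ffunP => x; rewrite !ffunE /= addn0 eq_sym. Qed.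

Lemma mset_insert pre post q : (size (pre ++ post)).+1 = d ->
  mset (pre ++ q :: post) = mmul (mset (pre ++ post)) (msingle d q).
Proof.
move=> hs; rewrite msingle_mset mmul_mset; last by rewrite size_cat /= addn1 hs.
by apply: mset_perm; rewrite -catA perm_cat2l -cat1s perm_catC.
Qed.

End Words.

Definition supported (E : finType) (d : nat) (m : msetT E d) (B : {set E}) : bool :=
  [forall e, (0 < m e) ==> (e \in B)].

Definition monomials (E : finType) (d : nat) (B : {set E}) : {set msetT E d} :=
  [set m in Sym E d d | supported m B].

Lemma supported0 (E : finType) (d : nat) (m : msetT E d) B e :
  supported m B -> e \notin B -> (m e : nat) = 0.
Proof.
move=> /forallP /(_ e) /implyP mB eB; apply/eqP; rewrite -leqn0 leqNgt.
exact: contra mB eB.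
Qed.

Lemma supported_mset (E : finType) (d : nat) (s : seq E) B :
  size s <= d -> supported (mset d s) B = all (mem B) s.
Proof.
move=> hs; apply/forallP/allP => [sB e es|sB e].
  by have /implyP := sB e; apply; rewrite mset_pos.
by rewrite mset_pos //; apply/implyP => /sB.
Qed.

(* There are at most binomial(|B| + d - 1, d) monomials of degree d in B:
   they inject into the tuples of |B| exponents summing to d. *)
Lemma card_monomials (E : finType) (d : nat) (B : {set E}) : 0 < d ->
  #|monomials d B| <= 'C(#|B| + d - 1, d).
Proof.
move=> d_gt0; case cB: #|B| => [|k].
  rewrite add0n bin_small; last by rewrite subn1 ltn_predL.
  rewrite leqn0 cards_eq0; apply/eqP/setP => m; rewrite !inE.
  apply/negbTE/negP => /andP[/eqP sum_d mB].
  have : \sum_e (m e : nat) = 0.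
    apply: big1 => e _; apply: (supported0 mB).
    by move/eqP: cB; rewrite cards_eq0 => /eqP ->; rewrite inE.
  by rewrite sum_d => d0; move: d_gt0; rewrite d0.
have szB (m : msetT E d) : size (map m (enum B)) == k.+1.
  by rewrite size_map -cardE cB.
pose f (m : msetT E d) : k.+1.-tuple 'I_d.+1 := Tuple (szB m).
have f_inj : {in monomials d B &, injective f}.
  move=> m1 m2; rewrite !inE => /andP[_ m1B] /andP[_ m2B] /(congr1 val) /= e12.
  apply/ffunP => e; case eB: (e \in B).
    by apply: (eq_in_map m1 m2 (enum B)).2 => //; rewrite mem_enum.
  by apply: val_inj; rewrite /= (supported0 m1B (negbT eB)) (supported0 m2B (negbT eB)).
have binC : 'C(k + d, d) = 'C(k + d, k) by rewrite -[X in 'C(_, X)](addKn k d) bin_sub ?leq_addr.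
rewrite -(card_in_imset f_inj) addSn subn1 /= binC -card_ord_partitions.
apply: subset_leq_card; apply/subsetP => t /imsetP[m + ->].
rewrite !inE => /andP[/eqP sum_d mB]; rewrite big_map big_enum /=.
apply/eqP; rewrite -[RHS]sum_d big_mkcond /=; apply: eq_bigr => e _.
by case: ifP => // eB; rewrite (supported0 mB) ?eB.
Qed.

Lemma FSym_mset (E : finType) (d : nat) (F : {set E}) (s : seq E) :
  size s = d -> (mset d s \in FSym d F) = has (mem F) s.
Proof.
move=> hs; rewrite inE mset_Sym ?hs //=.
apply/existsP/hasP => [[e /andP[eF]]|[e es eF]].
  by rewrite mset_pos ?hs // => es; exists e.
by exists e; rewrite mset_pos ?hs // es andbT.
Qed.

Lemma supported_subset (E : finType) (d : nat) (m : msetT E d) (A B : {set E}) :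
  A \subset B -> supported m A -> supported m B.
Proof.
move=> sAB /forallP mA; apply/forallP => e; apply/implyP => /(implyP (mA e)).
exact: (subsetP sAB).
Qed.

Lemma all2_in (A B : eqType) (R : A -> B -> bool) (t : seq A) (s : seq B) b :
  all2 R t s -> b \in t -> exists2 a, a \in s & R b a.
Proof.
elim: t s => [|c t IH] [|a s] //= /andP[Rca Rts]; rewrite inE => /orP[/eqP ->|bt].
  by exists a; rewrite ?inE ?eqxx.
by have [a' a's Rba'] := IH s Rts bt; exists a'; rewrite ?inE ?a's ?orbT.
Qed.

Lemma sumn_all2 (A B : eqType) (R : A -> B -> bool) (f : A -> nat) (g : B -> nat)
    (t : seq A) (s : seq B) :
  all2 R t s -> (forall b a, b \in t -> R b a -> f b <= g a) ->
  sumn (map f t) <= sumn (map g s).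
Proof.
elim: t s => [|c t IH] [|a s] //= /andP[Rca Rts] fg.
apply: leq_add; first by apply: fg; rewrite ?inE ?eqxx.
by apply: IH => // b a' bt; apply: fg; rewrite inE bt orbT.
Qed.

Section SymmetricQuasiPower.
Variables (E : finType) (d : nat) (M : matroid E) (Ms : nat -> matroid (msetT E d)).
Hypotheses (d_gt0 : 0 < d) (groundM : ground M = [set: E]).
Hypothesis quasi : sym_quasi_power M Ms.

Lemma ground_Msd : ground (Ms d) = Sym E d d.
Proof. by case: quasi => ground_Ms _; apply: ground_Ms; rewrite d_gt0 leqnn. Qed.

(* The transfer principle: a closure relation a \in cl_M(Q) is carried to
   M_d by multiplying with a fixed monomial alpha of degree d - 1, through
   the isomorphism M = M_1 ~ M_d|alpha (or trivially when M_d|alpha has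
   rank 0, i.e. alpha contains a loop). *)
Lemma cl_replace (pre post : seq E) (a : E) (Q : {set E}) (Y : {set msetT E d}) :
  (size (pre ++ post)).+1 = d -> cl M Q a ->
  (forall q, q \in Q -> cl (Ms d) Y (mset d (pre ++ q :: post))) ->
  cl (Ms d) Y (mset d (pre ++ a :: post)).
Proof.
case: quasi => ground_Ms [iso1 restr] hs clQa clQ.
rewrite mset_insert //; set alpha := mset d (pre ++ post).
have alphaS : alpha \in Sym E d (d - 1).
  by apply: mset_Sym; rewrite -hs ?subn1 ?leq_pred.
have singleS q : msingle d q \in Sym E d 1.
  by rewrite msingle_mset; apply: mset_Sym.
have range1 : 1 <= 1 <= d by rewrite leqnn d_gt0.
have := restr 1 range1 alpha alphaS.
case: ifP => _ iso_alpha; last by apply: (cl_rk0 _ iso_alpha); apply: imset_f.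
have clQ1 : cl (Ms 1) (msingle d @: Q) (msingle d a).
  by rewrite (iso_cl iso1) // groundM ?subsetT ?inE.
have clQd : cl (Ms d) (mmul alpha @: (msingle d @: Q)) (mmul alpha (msingle d a)).
  rewrite (iso_cl iso_alpha) // ground_Ms //.
  by apply/subsetP => z /imsetP[q _ ->].
apply: cl_trans clQd => z /imsetP[y /imsetP[q qQ ->] ->].
by rewrite -mset_insert //; apply: clQ.
Qed.

(* Iterating cl_replace over the letters of s: if each letter e of s is
   spanned by P e in M, then mset (pre ++ s) is spanned by any Y containing
   all the words pre ++ t where t replaces each letter e by an element of P e. *)
Lemma cl_expand (P : E -> {set E}) (s pre : seq E) (Y : {set msetT E d}) :
  size pre + size s = d -> (forall e, e \in s -> cl M (P e) e) ->
  (forall t, size t = size s -> all2 (fun b a => b \in P a) t s ->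
     cl (Ms d) Y (mset d (pre ++ t))) ->
  cl (Ms d) Y (mset d (pre ++ s)).
Proof.
elim: s pre => [|a s IH] pre hs clP clY; first exact: clY.
apply: (cl_replace (Q := P a)); first by rewrite size_cat -hs /= addnS.
  by apply: clP; rewrite inE eqxx.
move=> q qP; rewrite -cat_rcons; apply: IH.
- by rewrite size_rcons -hs /= addnS.
- by move=> e es; apply: clP; rewrite inE es orbT.
move=> t ht Pt; rewrite cat_rcons; apply: clY; first by rewrite /= ht.
by rewrite /= qP Pt.
Qed.

Lemma monomials_span (B : {set E}) : (forall e, cl M B e) ->
  {in Sym E d d, forall m, cl (Ms d) (monomials d B) m}.
Proof.
move=> clB m /Sym_mset[s hs <-].
apply: (@cl_expand (fun=> B) s [::]) => // t ht Bt; apply: cl_self.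
rewrite inE mset_Sym ?ht ?hs //= supported_mset ?ht ?hs //.
by apply/allP => b bt; have [a _] := all2_in Bt bt.
Qed.

(* In a symmetric power, the monomials in a basis B of M span M_d and are
   at most binomial(rk M + d - 1, d) = rk M_d many, so they are independent. *)
Lemma monomials_indep (B : {set E}) :
  mrank (Ms d) = 'C(mrank M + d - 1, d) ->
  indep M B -> #|B| = rk M [set: E] -> indep (Ms d) (monomials d B).
Proof.
move=> rank_d iB cB.
have clB e : cl M B e by apply: basis_cl (subsetT B) cB iB e (in_setT e).
apply: (spanning_indep (monomials_span clB)).
move: rank_d; rewrite /mrank ground_Msd groundM -cB => ->.
exact: card_monomials.
Qed.

End SymmetricQuasiPower.

Section FlatExtension.
Variables (E : finType) (d : nat) (M : matroid E) (Ms : nat -> matroid (msetT E d)).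
Hypotheses (d_gt0 : 0 < d) (groundM : ground M = [set: E]).
Hypothesis quasi : sym_quasi_power M Ms.
Variables (F BF B : {set E}).
Hypotheses (F_flat : flat M F) (BF_indep : indep M BF) (BF_F : BF \subset F)
  (BF_card : #|BF| = rk M F) (B_indep : indep M B) (BF_B : BF \subset B)
  (B_card : #|B| = rk M [set: E]).

Let B_span e : cl M B e.
Proof. exact: basis_cl (subsetT B) B_card B_indep e (in_setT e). Qed.

Let BF_span f : f \in F -> cl M BF f.
Proof. exact: basis_cl BF_F BF_card BF_indep f. Qed.

Let BF_span_out e : e \notin F -> ~~ cl M BF e.
Proof.
move=> eF; have eM : e \in ground M by rewrite groundM inE.
by apply: contra (flat_ncl F_flat eM eF); apply: cl_mono.
Qed.

(* Position of an element in the enumeration of E; used to order B \ BF. *)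
Definition ord_rk (e : E) : nat := enum_rank e.

Lemma ord_rk_inj : injective ord_rk.
Proof. by move=> a b /ord_inj /enum_rank_inj. Qed.

Definition newB : {set E} := B :\: BF.
Definition newB_below n : {set E} := [set g in newB | ord_rk g < n].

Lemma newB_belowS g : g \in newB ->
  newB_below (ord_rk g).+1 = g |: newB_below (ord_rk g).
Proof.
rewrite inE => gB; apply/setP => z.
rewrite in_setU1 !inE ltnS leq_eqVlt (inj_eq ord_rk_inj).
by case: eqVneq => [->|]; rewrite ?gB.
Qed.

(* g is the leading element of e: e is spanned by BF and the elements of
   newB up to g, and not without g, so that by exchange g is spanned by e,
   BF and the elements of newB strictly before g. *)
Definition leading e g : bool :=
  [&& g \in newB, cl M (BF :|: newB_below (ord_rk g).+1) e
    & cl M (e |: (BF :|: newB_below (ord_rk g))) g].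

Lemma leading_exists e : e \notin F -> exists g, leading e g.
Proof.
move=> eF; have [|n cln min_n] := ex_minnP (P := fun n => cl M (BF :|: newB_below n) e).
  exists #|E|; suff -> : BF :|: newB_below #|E| = B by [].
  apply/setP => z; rewrite !inE /ord_rk ltn_ord andbT.
  by case zBF: (z \in BF) => //=; rewrite (subsetP BF_B).
case: n cln min_n => [|m] cln min_n.
  have below0 : newB_below 0 = set0 by apply/setP => z; rewrite !inE ltn0 andbF.
  by move: cln; rewrite below0 setU0 (negbTE (BF_span_out eF)).
have nclm : ~~ cl M (BF :|: newB_below m) e by apply/negP => /min_n; rewrite ltnn.
have [g] : exists g, g \in newB_below m.+1 :\: newB_below m.
  apply/set0Pn; rewrite setD_eq0; apply: contra nclm => sub.
  suff -> : newB_below m = newB_below m.+1 by [].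
  apply/eqP; rewrite eqEsubset sub andbT; apply/subsetP => z.
  by rewrite !inE => /andP[-> /ltnW].
rewrite in_setD => /andP[ngm gm1].
have /andP[gB gm] : (g \in newB) && (ord_rk g <= m) by move: gm1; rewrite inE.
have {ngm gm1} mg : m <= ord_rk g by move: ngm; rewrite inE gB /= -leqNgt.
have {mg} {}gm : ord_rk g = m by apply/eqP; rewrite eqn_leq gm mg.
exists g; rewrite /leading gB gm cln /=; apply: cl_exch nclm.
by rewrite setUCA -gm -newB_belowS // gm.
Qed.

Definition lead e : E := odflt e [pick g | leading e g].

Lemma leadP e : e \notin F -> leading e (lead e).
Proof.
move=> eF; rewrite /lead; case: pickP => [g //|none].
by have [g] := leading_exists eF; rewrite none.
Qed.

Lemma lead_newB e : e \notin F -> lead e \in newB.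
Proof. by move/leadP/and3P => []. Qed.


Definition weight (m : msetT E d) : nat := \sum_e (m e : nat) * ord_rk e.

Lemma weight_mset s : size s <= d -> weight (mset d s) = sumn (map ord_rk s).
Proof. exact: sum_mset. Qed.

Definition below (u : msetT E d) : {set msetT E d} :=
  [set v in Sym E d d | supported v newB && (weight v < weight u)].

Lemma below_monomials u : below u \subset monomials d B :\ u.
Proof.
apply/subsetP => v; rewrite !inE => /andP[-> /andP[vB wv]].
apply/and3P; split => //; first by apply: contraTneq wv => ->; rewrite ltnn.
exact: supported_subset (subsetDl B BF) vB.
Qed.

(* Expand the letters of post through their leading elements: if pre
   consists of new basis elements and the positions of pre and of the
   leading elements of post add up to less than weight u, then
   mset (pre ++ post) is spanned by F.Sym and the monomials below u. *)
Lemma below_expand (pre post : seq E) (u : msetT E d) :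
  size pre + size post = d -> all (mem newB) pre -> {in post, forall e, e \notin F} ->
  sumn (map ord_rk pre) + sumn (map (ord_rk \o lead) post) < weight u ->
  cl (Ms d) (FSym d F :|: below u) (mset d (pre ++ post)).
Proof.
move=> hs preB postF wu.
apply: (cl_expand d_gt0 groundM quasi (P := fun e => BF :|: newB_below (ord_rk (lead e)).+1)).
- exact: hs.
- by move=> e /postF /leadP /and3P[].
move=> t ht Pt; apply: cl_self.
have hsz : size (pre ++ t) = d by rewrite size_cat ht.
case: (boolP (has (mem BF) t)) => [/hasP[b bt bBF]|noBF].
  rewrite in_setU FSym_mset //; apply/orP; left; apply/hasP.
  by exists b; [rewrite mem_cat bt orbT | apply: (subsetP BF_F)].
have tB b a : b \in t -> b \in BF :|: newB_below (ord_rk (lead a)).+1 ->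
    (b \in newB) && (ord_rk b <= ord_rk (lead a)).
  move=> bt; have bBF : b \notin BF := hasPn noBF b bt.
  by rewrite in_setU (negbTE bBF) inE.
rewrite in_setU; apply/orP; right; rewrite inE mset_Sym //=.
rewrite supported_mset ?hsz // all_cat preB /=; apply/andP; split.
  by apply/allP => b bt; have [a _ /(tB b a bt)/andP[]] := all2_in Pt bt.
rewrite weight_mset ?hsz // map_cat sumn_cat; apply: leq_ltn_trans wu.
rewrite leq_add2l; apply: (sumn_all2 Pt) => b a bt Pba.
by have /andP[] := tB b a bt Pba.
Qed.


Lemma lead_prefix_cl (s : seq E) j :
  size s = d -> {in s, forall e, e \notin F} -> j <= d ->
  cl (Ms d) (mset d s |: (FSym d F :|: below (mset d (map lead s))))
     (mset d (map lead (take j s) ++ drop j s)).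
Proof.
move=> hs sF; elim: j => [_|j IH ltjd].
  by rewrite take0 drop0; apply: cl_self; rewrite setU11.
have ltjs : j < size s by rewrite hs.
have a0 : E by move: ltjs; case: (s) => [//|y _ _]; exact: y.
set a := nth a0 s j; have aF : a \notin F by apply/sF/mem_nth.
have e_drop : drop j s = a :: drop j.+1 s by rewrite (drop_nth a0 ltjs).
rewrite (take_nth a0 ltjs) map_rcons cat_rcons.
move: (IH (ltnW ltjd)); rewrite e_drop.
set pre := map lead (take j s); set post := drop j.+1 s => clIH.
have hsz : (size (pre ++ post)).+1 = d.
  by rewrite size_cat size_map size_take ltjs size_drop -hs -addSn subnKC.
have wu : weight (mset d (map lead s)) =
    sumn (map ord_rk pre) + ord_rk (lead a) + sumn (map (ord_rk \o lead) post).
  rewrite weight_mset ?size_map ?hs // -[X in map lead X](cat_take_drop j) e_drop.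
  by rewrite !map_cat sumn_cat /= addnA map_comp.
have /and3P[_ _ cl_lead] := leadP aF.
apply: (cl_replace d_gt0 groundM quasi hsz cl_lead) => q.
rewrite in_setU1 in_setU => /or3P[/eqP -> // | qBF | ].
  apply: cl_self; rewrite !in_setU FSym_mset; last by rewrite size_cat /= addnS -size_cat.
  by rewrite has_cat /= (subsetP BF_F) ?orbT.
rewrite inE => /andP[qB qa]; apply: cl_mono (subsetUr _ _) _; rewrite -cat_rcons.
apply: below_expand.
- by rewrite size_rcons addSn -size_cat.
- rewrite all_rcons; apply/andP; split => //.
  apply/allP => _ /mapP[e /mem_take es ->].
  exact/lead_newB/sF.
- by move=> e /mem_drop; apply: sF.
by rewrite wu -cats1 map_cat sumn_cat /= addn0 ltn_add2r ltn_add2l.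
Qed.

(* F.Sym is spanned by the monomials in B other than u, when u avoids BF:
   expand a word containing f \in F using BF for f and B for the others. *)
Lemma FSym_cl_basis u : supported u newB ->
  {in FSym d F, forall m, cl (Ms d) (monomials d B :\ u) m}.
Proof.
move=> uB m; rewrite inE => /andP[/Sym_mset[s hs <-] /existsP[f /andP[fF]]].
rewrite mset_pos ?hs // => fs; rewrite (mset_perm d (perm_to_rem fs)).
have hsz : (size (rem f s)).+1 = d by rewrite size_rem // hs prednK.
apply: (cl_expand d_gt0 groundM quasi
  (P := fun e => if e \in F then BF else B) (pre := [::])) => //.
  by move=> e _; case: ifP => eF; [apply: BF_span | apply: B_span].
case=> [//|b t] /= ht /andP[]; rewrite fF => bBF Pt; apply: cl_self.
have hbt : size (b :: t) = d by rewrite /= ht.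
rewrite in_setD1 inE mset_Sym //= supported_mset ?hbt //=; apply/and3P; split.
- apply: contraTneq bBF => ebu.
  have /(implyP (forallP uB b)) : 0 < u b by rewrite -ebu mset_pos ?hbt ?mem_head.
  by rewrite inE => /andP[].
- exact: (subsetP BF_B).
apply/allP => e et; have [a _] := all2_in Pt et.
by case: ifP => _ // /(subsetP BF_B).
Qed.

(* Otherwise u = mset (map lead s) would be spanned by F.Sym and
   the monomials below u, hence by the other monomials in B, contradicting
   the independence of the monomials in B. *)
Lemma FSym_ncl x : mrank (Ms d) = 'C(mrank M + d - 1, d) ->
  x \in Sym E d d -> x \notin FSym d F -> ~~ cl (Ms d) (FSym d F) x.
Proof.
move=> rank_d /Sym_mset[s hs <-]; rewrite FSym_mset // => /hasPn sF.
set u := mset d (map lead s).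
have uB : supported u newB.
  rewrite supported_mset ?size_map ?hs //.
  by apply/allP => _ /mapP[e es ->]; apply/lead_newB/sF.
have u_mono : u \in monomials d B.
  by rewrite inE mset_Sym ?size_map //= (supported_subset (subsetDl B BF) uB).
have FSym_cl := FSym_cl_basis uB.
have Bd_indep := monomials_indep d_gt0 groundM quasi rank_d B_indep B_card.
apply/negP => clx; apply/negP: (indep_ncl Bd_indep u_mono); rewrite negbK.
have clu := lead_prefix_cl hs sF (leqnn d).
rewrite take_oversize ?drop_oversize ?hs // cats0 in clu.
apply: cl_trans clu => v.
rewrite in_setU1 in_setU => /or3P[/eqP -> | /FSym_cl // | vu].
  exact: cl_trans FSym_cl clx.
by apply: cl_self; apply: (subsetP (below_monomials u)).
Qed.

End FlatExtension.

Theorem proposition2p19 (E : finType) (d : nat) (M : matroid E)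
    (Ms : nat -> matroid (msetT E d)) :
  1 <= d -> ground M = [set: E] -> sym_power M Ms ->
  forall F : {set E}, flat M F -> flat (Ms d) (FSym d F).
Proof.
move=> d_gt0 groundM [quasi rank_d] F F_flat.
have [BF [BF_indep _ BF_F BF_card]] := indep_extend (indep0 M) (sub0set F).
have [B [B_indep BF_B _ B_card]] := indep_extend BF_indep (subsetT BF).
have FSym_ncl := FSym_ncl d_gt0 groundM quasi F_flat BF_indep BF_F BF_card
  B_indep BF_B B_card rank_d.
apply: ncl_flat => [|x]; rewrite (ground_Msd d_gt0 quasi).
  by apply/subsetP => m /setIdP[].
by case/setDP => xS xF; apply: FSym_ncl.
Qed.
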